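(* Let $\mathcal{A}$ be a complete deterministic one-clock timed automaton over the alphabet $\Sigma$, and let $\textsf{MQ}$ be the membership function of $L(\mathcal{A})$, i.e. $\textsf{MQ}(\omega)=+$ if $\omega\in L(\mathcal{A})$ and $\textsf{MQ}(\omega)=-$ otherwise. Let $\omega_1,\omega_2$ be timed words, $e$ a timed word (the suffix), and $i_1,i_2$ natural numbers such that $i_1=k_{\mathcal{A}}(\omega_1)$ and $i_2=k_{\mathcal{A}}(\omega_2)$. If the test $T(\omega_1,\omega_2,i_1,i_2,e)=\bot$, then the runs of $\mathcal{A}$ on $\omega_1$ and on $\omega_2$ end in different locations of $\mathcal{A}$.
   Context: A one-clock timed automaton (OTA) is a tuple $\mathcal{A}=(\Sigma,Q,q_0,F,c,\Delta)$ with finite alphabet $\Sigma$, finite location set $Q$, initial location $q_0$, accepting locations $F\subseteq Q$, a single clock $c$, and finite transition set $\Delta\subseteq Q\times\Sigma\times\Phi_c\times\{\top,\bot\}\times Q$, where a guard in $\Phi_c$ is an interval of $\mathbb{R}_{\ge 0}$ with endpoints in $\mathbb{N}\cup\{\infty\}$. A timed word is $\omega=(\sigma_1,t_1)\cdots(\sigma_n,t_n)$ with $\sigma_i\in\Sigma$, $t_i\in\mathbb{R}_{\ge0}$ ($t_i$ is the delay before $\sigma_i$); $|\omega|=n$. A run on $\omega$ is $(q_0,\nu_0)\to(q_1,\nu_1)\to\cdots\to(q_n,\nu_n)$ with $\nu_0=0$, where for each $i$ there is a transition $(q_{i-1},\sigma_i,\phi_i,b_i,q_i)\in\Delta$ with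 $\nu_{i-1}+t_i\in\phi_i$, and $\nu_i=0$ if $b_i=\top$, $\nu_i=\nu_{i-1}+t_i$ otherwise; $\omega$ is accepted if $q_n\in F$. The OTA is deterministic (DOTA) if guards of transitions from the same location with the same action are pairwise disjoint, and complete if for each location and action these guards partition $\mathbb{R}_{\ge0}$ (so each timed word has exactly one run). The last reset $k_{\mathcal{A}}(\omega)$ is $0$ if $b_i=\bot$ for all $i$ in the run of $\omega$, and otherwise the largest $i$ with $b_i=\top$. For a timed word $\omega$ of length $n$ and $0\le i\le n$, let $\nu_c(\omega,i)=\sum_{j=i+1}^{n}t_j$ (equal to $0$ if $i=n$). The test $T(\omega_1,\omega_2,i_1,i_2,e)$ is defined as follows. If $e$ is empty, $T=\top$ iff $\textsf{MQ}(\omega_1)=\textsf{MQ}(\omega_2)$. If $e=(\sigma_1,t_1)(\sigma_2,t_2)\cdots(\sigma_m,t_m)$ is nonempty, let $\nu_1=\nu_c(\omega_1,i_1)$, $\nu_2=\nu_c(\omega_2,i_2)$; if $\nu_1>\nu_2$ put $e_1=e$ and $e_2=(\sigma_1,t_1+(\nu_1-\nu_2))(\sigma_2,t_2)\cdots(\sigma_m,t_m)$; if $\nu_1<\nu_2$ put $e_1=(\sigma_1,t_1+(\nu_2-\nu_1))(\sigma_2,t_2)\cdots(\sigma_m,t_m)$ and $e_2=e$; if $\nu_1=\nu_2$ put $e_1=e_2=e$. Then $T=\top$ iff $\textsf{MQ}(\omega_1\cdot e_1)=\textsf{MQ}(\omega_2\cdot e_2)$, and $T=\bot$ otherwise. 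*)

From Stdlib Require Import Reals List.
From mathcomp Require Import ssreflect ssrbool eqtype fintype.
Import ListNotations.
Open Scope R_scope.

(* Guard: interval of R>=0 with endpoints in N u {oo}.
   lower endpoint lo (closed iff lo_cl); upper endpoint hi = None means +oo (open). *)
Record guard := Guard { lo : nat; lo_cl : bool; hi : option nat; hi_cl : bool }.

Definition in_guard (g : guard) (x : R) : Prop :=
  (if lo_cl g then INR (lo g) <= x else INR (lo g) < x) /\
  match hi g with
  | None => True
  | Some h => if hi_cl g then x <= INR h else x < INR h
  end.

Section OTA.
Variables (Sigma Q : finType).

Record trans := Trans { src : Q; act : Sigma; grd : guard; rst : bool; dst : Q }.

Record OTA := MkOTA { q0 : Q; accepting : Q -> bool; delta : list trans }.

Definition timed_word := list (Sigma * R).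

Definition valid_tw (w : timed_word) : Prop := Forall (fun p => 0 <= snd p) w.

Definition deterministic (A : OTA) : Prop :=
  forall t1 t2, In t1 (delta A) -> In t2 (delta A) ->
    src t1 = src t2 -> act t1 = act t2 ->
    (exists x, in_guard (grd t1) x /\ in_guard (grd t2) x) -> t1 = t2.

Definition complete (A : OTA) : Prop :=
  forall (q : Q) (a : Sigma) (x : R), 0 <= x ->
    exists t, In t (delta A) /\ src t = q /\ act t = a /\ in_guard (grd t) x.

Fixpoint run_from (A : OTA) (q : Q) (nu : R) (w : timed_word) (trs : list trans)
  : Prop :=
  match w, trs with
  | [], [] => True
  | (a, t) :: w', tr :: trs' =>
      In tr (delta A) /\ src tr = q /\ act tr = a /\ in_guard (grd tr) (nu + t) /\
      run_from A (dst tr) (if rst tr then 0 else nu + t) w' trs'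
  | _, _ => False
  end.

Definition is_run (A : OTA) (w : timed_word) (trs : list trans) : Prop :=
  run_from A (q0 A) 0 w trs.

Fixpoint final_loc (q : Q) (trs : list trans) : Q :=
  match trs with [] => q | tr :: r => final_loc (dst tr) r end.

Definition end_loc (A : OTA) (trs : list trans) : Q := final_loc (q0 A) trs.

(* last reset: largest (1-based) i with b_i = top, or 0 *)
Fixpoint last_reset_aux (trs : list trans) (i acc : nat) : nat :=
  match trs with
  | [] => acc
  | tr :: r => last_reset_aux r (S i) (if rst tr then S i else acc)
  end.
Definition last_reset (trs : list trans) : nat := last_reset_aux trs 0 0.

Definition MQ (A : OTA) (w : timed_word) : Prop :=
  exists trs, is_run A w trs /\ accepting A (end_loc A trs) = true.

(* nu_c(w, i) = sum_{j=i+1}^{n} t_j *)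
Definition nu_c (w : timed_word) (i : nat) : R :=
  fold_right Rplus 0 (map snd (skipn i w)).

(* The test T(w1,w2,i1,i2,e); the Prop is "T = top". *)
Definition test (A : OTA) (w1 w2 : timed_word) (i1 i2 : nat) (e : timed_word)
  : Prop :=
  match e with
  | [] => (MQ A w1 <-> MQ A w2)
  | (a, t) :: e' =>
      let v1 := nu_c w1 i1 in
      let v2 := nu_c w2 i2 in
      if Rlt_dec v2 v1 then
        (MQ A (w1 ++ e) <-> MQ A (w2 ++ (a, t + (v1 - v2)) :: e'))
      else if Rlt_dec v1 v2 then
        (MQ A (w1 ++ (a, t + (v2 - v1)) :: e') <-> MQ A (w2 ++ e))
      else (MQ A (w1 ++ e) <-> MQ A (w2 ++ e))
  end.

End OTA.

Arguments trans : clear implicits.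
Arguments OTA : clear implicits.
Arguments deterministic {Sigma Q}.
Arguments complete {Sigma Q}.
Arguments valid_tw {Sigma}.
Arguments is_run {Sigma Q}.
Arguments run_from {Sigma Q}.
Arguments end_loc {Sigma Q}.
Arguments last_reset {Sigma Q}.
Arguments MQ {Sigma Q}.
Arguments test {Sigma Q}.
Arguments nu_c {Sigma}.

(* A run of a deterministic OTA on [w ++ x] is the run on [w] followed by a run
   on [x] from the configuration reached after [w], so membership of [w ++ x]
   depends only on that configuration: the final location and the final clock
   value.  The final clock value is the time elapsed since the last reset, i.e.
   [nu_c w (last_reset trs)].  When [w1] and [w2] end in the same location, the
   test delays the first letter of [e] so that both clocks agree when it is
   read, hence the two membership queries it compares have the same answer. *)
From Stdlib Require Import Reals List Lra Lia.
From mathcomp Require Import ssreflect ssrbool eqtype fintype.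
Import ListNotations.
Open Scope R_scope.

Arguments rst {Sigma Q}.
Arguments accepting {Sigma Q}.
Arguments final_loc {Sigma Q}.
Arguments last_reset_aux {Sigma Q}.

Section LastReset.
Context {Sigma Q : finType}.
Implicit Types (trs : list (trans Sigma Q)) (w : timed_word Sigma).

Fixpoint clock_after (nu : R) w trs : R :=
  match w, trs with
  | (_, t) :: w', tr :: trs' => clock_after (if rst tr then 0 else nu + t) w' trs'
  | _, _ => nu
  end.

Lemma last_reset_auxE trs i acc :
  last_reset_aux trs i acc =
  if List.existsb rst trs then (i + last_reset trs)%nat else acc.
Proof.
elim: trs i acc => [|tr trs IH] i acc //=.
rewrite /last_reset /= !IH.
by case: (rst tr); case: (List.existsb rst trs) => /=; lia.
Qed.

Lemma last_reset_cons tr trs :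
  last_reset (tr :: trs) =
  if List.existsb rst trs then S (last_reset trs) else if rst tr then 1%nat else 0%nat.
Proof. by rewrite /last_reset /= last_reset_auxE. Qed.

Lemma last_reset_no_reset trs : List.existsb rst trs = false -> last_reset trs = 0%nat.
Proof. by move=> no_rst; rewrite /last_reset last_reset_auxE no_rst. Qed.

Lemma nu_c_cons a t w i :
  nu_c ((a, t) :: w) i = if i is S j then nu_c w j else t + nu_c w 0.
Proof. by case: i. Qed.

Lemma clock_afterE {A : OTA Sigma Q} {q nu w trs} :
  run_from A q nu w trs ->
  clock_after nu w trs =
  (if List.existsb rst trs then 0 else nu) + nu_c w (last_reset trs).
Proof.
elim: w trs q nu => [|[a t] w IH] [|tr trs] q nu //=.
  by move=> _; rewrite /nu_c /=; lra.
move=> [_ [_ [_ [_ run_w]]]]; rewrite (IH _ _ _ run_w) last_reset_cons nu_c_cons.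
case Er: (List.existsb rst trs); first by rewrite orbT.
rewrite orbF last_reset_no_reset //.
by case: (rst tr); rewrite /nu_c /=; lra.
Qed.

Lemma clock_after_run {A : OTA Sigma Q} {w trs} :
  is_run A w trs -> clock_after 0 w trs = nu_c w (last_reset trs).
Proof. by move=> run_w; rewrite (clock_afterE run_w); case: List.existsb; lra. Qed.

End LastReset.

Section Residual.
Variables (Sigma Q : finType) (A : OTA Sigma Q).
Implicit Types (trs : list (trans Sigma Q)) (w x : timed_word Sigma).

Definition accepts_from (q : Q) (nu : R) x : Prop :=
  exists tb, run_from A q nu x tb /\ accepting A (final_loc q tb) = true.

Lemma final_loc_cat q trs tb :
  final_loc q (trs ++ tb) = final_loc (final_loc q trs) tb.
Proof. by elim: trs q => [|tr trs IH] q //=. Qed.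

Lemma run_from_cat q nu w x trs tb :
  run_from A q nu w trs ->
  run_from A (final_loc q trs) (clock_after nu w trs) x tb ->
  run_from A q nu (w ++ x) (trs ++ tb).
Proof.
elim: w trs q nu => [|[a t] w IH] [|tr trs] q nu //=.
by move=> [? [? [? [? run_w]]]] run_x; do 4 (split; first done); apply: IH.
Qed.

Lemma run_from_cat_inv (det : deterministic A) {q nu w x trs tt} :
  run_from A q nu w trs -> run_from A q nu (w ++ x) tt ->
  exists2 tb, tt = trs ++ tb &
    run_from A (final_loc q trs) (clock_after nu w trs) x tb.
Proof.
elim: w trs q nu tt => [|[a t] w IH] [|tr trs] q nu tt //=; first by exists tt.
move=> [in_tr [src_tr [act_tr [grd_tr run_w]]]].
case: tt => [|tr' tt] //= [in_tr' [src_tr' [act_tr' [grd_tr' run_wx]]]].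
have same_tr : tr' = tr.
  by apply: det => //; [congruence | congruence | exists (nu + t)].
subst tr'.
have [tb -> run_x] := IH _ _ _ _ run_w run_wx.
by exists tb.
Qed.

Lemma MQ_cat (det : deterministic A) {w trs} :
  is_run A w trs -> forall x,
  (MQ A (w ++ x) <-> accepts_from (end_loc A trs) (clock_after 0 w trs) x).
Proof.
move=> run_w x; rewrite /MQ /accepts_from /end_loc; split.
  move=> [tt [run_wx acc]].
  have [tb E run_x] := run_from_cat_inv det run_w run_wx.
  by exists tb; rewrite -final_loc_cat -E.
move=> [tb [run_x acc]]; exists (trs ++ tb).
by rewrite final_loc_cat; split=> //; apply: run_from_cat.
Qed.

Lemma accepts_from_nil q nu : accepts_from q nu [] <-> accepting A q = true.
Proof.
split; last by exists [].
by move=> [[|? ?] [? acc]].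
Qed.

Lemma accepts_from_delay q nu nu' a t t' x :
  nu + t = nu' + t' ->
  (accepts_from q nu ((a, t) :: x) <-> accepts_from q nu' ((a, t') :: x)).
Proof.
move=> E; rewrite /accepts_from /=.
by split=> -[[|tr tb] [run_x acc]] //; exists (tr :: tb); rewrite /= ?E // -E.
Qed.

Lemma test_same_end_loc (det : deterministic A) w1 w2 e trs1 trs2 :
  is_run A w1 trs1 -> is_run A w2 trs2 ->
  end_loc A trs1 = end_loc A trs2 ->
  test A w1 w2 (last_reset trs1) (last_reset trs2) e.
Proof.
move=> run1 run2 same_loc.
have MQ1 := MQ_cat det run1; have MQ2 := MQ_cat det run2.
rewrite /test -(clock_after_run run1) -(clock_after_run run2).
case: e => [|[a t] e].
  by rewrite -[w1]app_nil_r -[w2]app_nil_r MQ1 MQ2 !accepts_from_nil same_loc.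
by do 2?case: Rlt_dec => ? /=; rewrite MQ1 MQ2 same_loc;
  apply: accepts_from_delay; lra.
Qed.

End Residual.

Theorem lemma1 (Sigma Q : finType) (A : OTA Sigma Q)
  (w1 w2 e : timed_word Sigma) (i1 i2 : nat)
  (trs1 trs2 : list (trans Sigma Q)) :
  deterministic A -> complete A ->
  valid_tw w1 -> valid_tw w2 -> valid_tw e ->
  is_run A w1 trs1 -> is_run A w2 trs2 ->
  i1 = last_reset trs1 -> i2 = last_reset trs2 ->
  ~ test A w1 w2 i1 i2 e ->
  end_loc A trs1 <> end_loc A trs2.
Proof.
move=> det _ _ _ _ run1 run2 -> -> test_fails same_loc.
by apply: test_fails; apply: test_same_end_loc.
Qed.
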